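(* Let $A\subset\mathbb N$ be a translate of an SIP set, i.e. suppose there exist an infinite set $L\subset\mathbb N$ and $u\in\mathbb Z$ with $(SIP(L)+u)\cap\mathbb N\subset A$. Then for every odd positive integer $K$, the map $\pi_K\circ z:A\to\mathbb Z/K\mathbb Z$ is surjective, where $\pi_K:\mathbb Z\to\mathbb Z/K\mathbb Z$ is the quotient map.
   Context: $\mathbb N=\{1,2,\dots\}$. For a finite $F\subset\mathbb Z$, $\sigma_F$ is the sum of its elements ($\sigma_\emptyset=0$); for $A\subset\mathbb Z$, $IP(A)=\{\sigma_F:F\subset A\text{ finite}\}$ and $SIP(A)=\{a-b:a,b\in IP(A)\}$. Every integer $t$ has a unique balanced ternary expansion $t=\sum_{n\in\mathbb N}\epsilon_n3^{n-1}$ with $\epsilon_n\in\{-1,0,1\}$, finitely many nonzero; let $r(t)$ be the number of nonzero digits and $j_1(t)<\dots<j_{r(t)}(t)$ their indices. The sign change count $z:\mathbb N\to\mathbb Z_+$ is $z(t)=\#\{i\in\{1,\dots,r(t)-1\}:\epsilon_{j_i(t)}\epsilon_{j_{i+1}(t)}<0\}$ (the number of sign changes between consecutive nonzero digits; in particular $z(3^{n-1})=0$). *)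

From Stdlib Require Import ZArith List Lia.
Import ListNotations.
Open Scope Z_scope.

(* sigma_F for a finite set F given as a duplicate-free list *)
Definition zsum (l : list Z) : Z := fold_right Z.add 0 l.

Definition IP (A : Z -> Prop) (x : Z) : Prop :=
  exists F : list Z, NoDup F /\ Forall A F /\ zsum F = x.

Definition SIP (A : Z -> Prop) (x : Z) : Prop :=
  exists a b, IP A a /\ IP A b /\ x = a - b.

Definition infinite_set (L : Z -> Prop) : Prop :=
  ~ exists l : list Z, forall x, L x -> In x l.

(* Balanced ternary digits eps_1, eps_2, ... (least significant first),
   computed with fuel; fuel |t|+1 suffices since |(t-d)/3| < |t| for t <> 0. *)
Fixpoint bt_digits_fuel (fuel : nat) (t : Z) : list Z :=
  match fuel with
  | O => []
  | S f =>
      if Z.eqb t 0 then []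
      else
        let r := t mod 3 in
        let d := if Z.eqb r 2 then -1 else r in
        d :: bt_digits_fuel f ((t - d) / 3)
  end.

Definition bt_digits (t : Z) : list Z := bt_digits_fuel (S (Z.to_nat (Z.abs t))) t.

Fixpoint sign_changes (l : list Z) : nat :=
  match l with
  | x :: ((y :: _) as tl) => Nat.add (if x * y <? 0 then 1%nat else 0%nat) (sign_changes tl)
  | _ => O
  end.

(* z(t): number of sign changes between consecutive nonzero balanced-ternary digits *)
Definition zsc (t : Z) : nat :=
  sign_changes (filter (fun d => negb (Z.eqb d 0)) (bt_digits t)).

Example bt_ex1 : bt_digits 5 = [-1; -1; 1]. Proof. reflexivity. Qed.
Example bt_ex2 : bt_digits (-7) = [-1; 1; -1]. Proof. reflexivity. Qed.
Example zsc_ex1 : zsc 5 = 1%nat. Proof. reflexivity. Qed.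
Example zsc_ex2 : zsc 9 = 0%nat. Proof. reflexivity. Qed.
Example zsc_ex3 : zsc 7 = 2%nat. Proof. reflexivity. Qed.

From Stdlib Require Import ZArith List Lia Classical.
Import ListNotations.
Open Scope Z_scope.

(* Write [z] for [zsc] and let [y] be a nonzero number with at most [M] balanced ternary
   digits. For [w <> 0] the digits of [y + 3^M w] are those of [y] followed by those of [w],
   so [z (y + 3^M w) = z y + z w + c] where [c] records whether a sign change occurs at the
   junction; replacing [w] by [-w] flips [c]. Since an infinite set [L] contains two fresh
   elements [y1 <> y2] with [y1 = y2 mod 3^M], adding [±(y1 - y2)] turns a run of [n]
   consecutive values of [z] on [u + SIP L] into a run of [n + 1] consecutive values, all
   realised by numbers sharing their least significant nonzero digit. That digit together
   with the parity of [z] determines the sign, so a run of length [2K + 1] yields positive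
   elements whose [z]-values form an arithmetic progression of difference [2] and length [K];
   as [2] is invertible modulo an odd [K], these hit every residue class. *)

Fixpoint bt_val (l : list Z) : Z :=
  match l with [] => 0 | d :: l' => d + 3 * bt_val l' end.

Definition digit (d : Z) : Prop := -1 <= d <= 1.

Fixpoint bt_canonical (l : list Z) : Prop :=
  match l with
  | [] => True
  | d :: l' => digit d /\ bt_canonical l' /\ (l' = [] -> d <> 0)
  end.

Lemma bt_digits_fuel_spec (f : nat) (t : Z) : Z.abs t < Z.of_nat f ->
  bt_canonical (bt_digits_fuel f t) /\ bt_val (bt_digits_fuel f t) = t.
Proof.
  revert t; induction f as [|f IH]; intros t Ht; [lia|].
  rewrite Nat2Z.inj_succ in Ht; cbn [bt_digits_fuel].
  destruct (Z.eqb_spec t 0) as [->|Ht0]; [split; [exact I | reflexivity]|].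
  pose proof (Z.div_mod t 3 ltac:(lia)) as Hdm.
  pose proof (Z.mod_pos_bound t 3 ltac:(lia)) as Hr.
  set (q := t / 3) in *; set (r := t mod 3) in *; clearbody q r.
  destruct (Z.eqb_spec r 2) as [Hr2|Hr2].
  - replace ((t - -1) / 3) with (q + 1) by (rewrite <- (Z.div_mul (q + 1) 3); f_equal; lia).
    destruct (IH (q + 1) ltac:(lia)) as [Hc Hv].
    cbn [bt_val bt_canonical]; unfold digit; repeat split; auto; lia.
  - replace ((t - r) / 3) with q by (rewrite <- (Z.div_mul q 3); f_equal; lia).
    destruct (IH q ltac:(lia)) as [Hc Hv].
    cbn [bt_val bt_canonical]; unfold digit; repeat split; try lia; auto.
    intros E; rewrite E in Hv; cbn in Hv; lia.
Qed.

Lemma bt_digits_spec (t : Z) : bt_canonical (bt_digits t) /\ bt_val (bt_digits t) = t.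
Proof. apply bt_digits_fuel_spec; lia. Qed.

Lemma bt_val_eq0 (l : list Z) : bt_canonical l -> bt_val l = 0 -> l = [].
Proof.
  induction l as [|d l IH]; cbn [bt_val bt_canonical]; [auto|].
  intros (Hd & Hl & Hlast) H0; unfold digit in Hd.
  exfalso; apply Hlast; [apply IH|]; auto; lia.
Qed.

Lemma bt_val_inj (l1 l2 : list Z) :
  bt_canonical l1 -> bt_canonical l2 -> bt_val l1 = bt_val l2 -> l1 = l2.
Proof.
  revert l2; induction l1 as [|d l1 IH]; intros l2 H1 H2 E.
  - symmetry; apply bt_val_eq0; auto.
  - destruct l2 as [|e l2]; [apply bt_val_eq0; auto|].
    cbn [bt_val bt_canonical] in *; unfold digit in *.
    destruct H1 as (Hd & H1 & _), H2 as (He & H2 & _).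
    assert (d = e) as -> by lia.
    f_equal; apply IH; auto; lia.
Qed.

Lemma bt_digits_bt_val (l : list Z) : bt_canonical l -> bt_digits (bt_val l) = l.
Proof.
  intros Hl; destruct (bt_digits_spec (bt_val l)) as [Hc Hv].
  apply bt_val_inj; auto.
Qed.

Lemma bt_digits_eq_nil (t : Z) : bt_digits t = [] <-> t = 0.
Proof.
  split; [|intros ->; reflexivity].
  intros E; destruct (bt_digits_spec t) as [_ Hv]; rewrite E in Hv; cbn in Hv; lia.
Qed.

Lemma bt_val_app (l1 l2 : list Z) :
  bt_val (l1 ++ l2) = bt_val l1 + 3 ^ Z.of_nat (length l1) * bt_val l2.
Proof.
  induction l1 as [|d l1 IH]; cbn [bt_val app length]; [lia|].
  rewrite IH, Nat2Z.inj_succ, Z.pow_succ_r by lia; ring.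
Qed.

Lemma bt_val_repeat0 (k : nat) : bt_val (repeat 0 k) = 0.
Proof. induction k; cbn [bt_val repeat]; lia. Qed.

Lemma bt_canonical_digits (l : list Z) : bt_canonical l -> Forall digit l.
Proof. induction l; cbn; intros; constructor; tauto. Qed.

Lemma bt_canonical_app (l1 l2 : list Z) :
  Forall digit l1 -> bt_canonical l2 -> l2 <> [] -> bt_canonical (l1 ++ l2).
Proof.
  induction 1 as [|d l1 Hd Hl1 IH]; intros Hl2 Hne; cbn [app bt_canonical]; auto.
  split; [exact Hd|split; [auto|]].
  intros E; apply app_eq_nil in E; tauto.
Qed.

Lemma bt_canonical_opp (l : list Z) : bt_canonical l ->
  bt_canonical (map Z.opp l) /\ bt_val (map Z.opp l) = - bt_val l.
Proof.
  induction l as [|d l IH]; cbn [bt_val bt_canonical map]; unfold digit; [auto|].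
  intros (Hd & Hl & Hlast); destruct (IH Hl) as [Hc Hv].
  repeat split; try lia; auto.
  intros E; apply map_eq_nil in E; specialize (Hlast E); lia.
Qed.

Lemma bt_digits_opp (t : Z) : bt_digits (- t) = map Z.opp (bt_digits t).
Proof.
  destruct (bt_digits_spec t) as [Hc Hv]; destruct (bt_canonical_opp _ Hc) as [Hc' Hv'].
  rewrite <- (bt_digits_bt_val _ Hc'), Hv', Hv; reflexivity.
Qed.

Lemma bt_digits_shift (y v : Z) (M : nat) :
  (length (bt_digits y) <= M)%nat -> v <> 0 ->
  bt_digits (y + 3 ^ Z.of_nat M * v)
  = bt_digits y ++ repeat 0 (M - length (bt_digits y)) ++ bt_digits v.
Proof.
  intros HM Hv.
  destruct (bt_digits_spec y) as [Hcy Hy], (bt_digits_spec v) as [Hcv Hvv].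
  assert (Hne : bt_digits v <> []) by (rewrite bt_digits_eq_nil; exact Hv).
  apply bt_val_inj; [apply bt_digits_spec| |].
  - apply bt_canonical_app; [apply bt_canonical_digits; exact Hcy| |].
    + apply bt_canonical_app; auto.
      apply Forall_forall; intros x Hx; apply repeat_spec in Hx; subst; unfold digit; lia.
    + intros E; apply app_eq_nil in E; tauto.
  - rewrite (proj2 (bt_digits_spec _)), !bt_val_app, bt_val_repeat0, repeat_length, Hy, Hvv.
    replace M with (length (bt_digits y) + (M - length (bt_digits y)))%nat at 1 by lia.
    rewrite Nat2Z.inj_add, Z.pow_add_r by lia; ring.
Qed.

Lemma bt_length_shift (y v : Z) (M : nat) :
  (length (bt_digits y) <= M)%nat -> v <> 0 ->
  length (bt_digits (y + 3 ^ Z.of_nat M * v)) = (M + length (bt_digits v))%nat.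
Proof.
  intros HM Hv; rewrite bt_digits_shift by auto.
  rewrite !length_app, repeat_length; lia.
Qed.

Lemma shift_neq0 (y v : Z) (M : nat) :
  (length (bt_digits y) <= M)%nat -> v <> 0 -> y + 3 ^ Z.of_nat M * v <> 0.
Proof.
  intros HM Hv E.
  pose proof (bt_length_shift y v M HM Hv) as Hlen.
  rewrite E in Hlen; change (length (bt_digits 0)) with 0%nat in Hlen.
  apply Hv, bt_digits_eq_nil, length_zero_iff_nil; lia.
Qed.

Definition nzdigits (t : Z) : list Z := filter (fun d => negb (d =? 0)) (bt_digits t).

Definition unit_sign (d : Z) : Prop := d = 1 \/ d = -1.

Lemma zsc_nzdigits (t : Z) : zsc t = sign_changes (nzdigits t).
Proof. reflexivity. Qed.

Lemma nzdigits_shift (y v : Z) (M : nat) :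
  (length (bt_digits y) <= M)%nat -> v <> 0 ->
  nzdigits (y + 3 ^ Z.of_nat M * v) = nzdigits y ++ nzdigits v.
Proof.
  intros HM Hv; unfold nzdigits; rewrite bt_digits_shift, !filter_app by auto.
  f_equal; rewrite <- app_nil_l at 1; f_equal.
  induction (M - length (bt_digits y))%nat; auto.
Qed.

Lemma nzdigits_opp (t : Z) : nzdigits (- t) = map Z.opp (nzdigits t).
Proof.
  unfold nzdigits; rewrite bt_digits_opp.
  induction (bt_digits t) as [|d l IH]; [reflexivity|].
  cbn [map filter]; rewrite IH; destruct (Z.eqb_spec d 0) as [->|Hd]; [reflexivity|].
  destruct (Z.eqb_spec (- d) 0); [lia | reflexivity].
Qed.

Lemma nzdigits_unit_sign (t : Z) : Forall unit_sign (nzdigits t).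
Proof.
  destruct (bt_digits_spec t) as [Hc _]; apply bt_canonical_digits in Hc.
  apply Forall_forall; intros d Hd; apply filter_In in Hd as [Hin Hnz].
  rewrite Forall_forall in Hc; specialize (Hc d Hin); unfold digit, unit_sign in *.
  destruct (Z.eqb_spec d 0); [discriminate | lia].
Qed.

Lemma sgn_bt_val (l : list Z) : bt_canonical l -> Z.sgn (bt_val l) = last l 0.
Proof.
  induction l as [|d l IH]; [reflexivity|].
  cbn [bt_val bt_canonical]; unfold digit; intros (Hd & Hl & Hlast).
  destruct l as [|e l'].
  - specialize (Hlast eq_refl); cbn; destruct (Z.eqb_spec d 1) as [->|]; [reflexivity|].
    replace d with (-1) by lia; reflexivity.
  - assert (Hv : bt_val (e :: l') <> 0) by (intros E; apply bt_val_eq0 in E; easy).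
    change (last (d :: e :: l') 0) with (last (e :: l') 0); rewrite <- IH by exact Hl.
    destruct (Z.lt_trichotomy (bt_val (e :: l')) 0) as [Hn|[Hz|Hp]]; [|contradiction|].
    + rewrite !Z.sgn_neg by lia; reflexivity.
    + rewrite !Z.sgn_pos by lia; reflexivity.
Qed.

Lemma last_filter_nonzero (l : list Z) : last l 0 <> 0 ->
  last (filter (fun d => negb (d =? 0)) l) 0 = last l 0.
Proof.
  intros Hl; assert (Hne : l <> []) by (intros ->; apply Hl; reflexivity).
  destruct (exists_last Hne) as (l' & a & ->).
  rewrite last_last in *; rewrite filter_app; cbn.
  destruct (Z.eqb_spec a 0); [contradiction|]; apply last_last.
Qed.

Lemma last_nzdigits (t : Z) : last (nzdigits t) 0 = Z.sgn t.
Proof.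
  destruct (Z.eq_dec t 0) as [->|Ht]; [reflexivity|].
  destruct (bt_digits_spec t) as [Hc Hv].
  pose proof (sgn_bt_val _ Hc) as Hs; rewrite Hv in Hs.
  unfold nzdigits; rewrite last_filter_nonzero; [auto|].
  rewrite <- Hs; intros E; apply Ht, Z.sgn_null_iff, E.
Qed.

Lemma nzdigits_neq_nil (t : Z) : t <> 0 -> nzdigits t <> [].
Proof.
  intros Ht E; pose proof (last_nzdigits t) as Hl; rewrite E in Hl.
  apply Ht, Z.sgn_null_iff; rewrite <- Hl; reflexivity.
Qed.

Lemma hd_nzdigits_unit_sign (t : Z) : t <> 0 -> unit_sign (hd 0 (nzdigits t)).
Proof.
  intros Ht; pose proof (nzdigits_unit_sign t) as Hu; pose proof (nzdigits_neq_nil t Ht).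
  destruct (nzdigits t); [contradiction|]; inversion Hu; assumption.
Qed.

Lemma hd_nzdigits_shift (y v : Z) (M : nat) :
  y <> 0 -> (length (bt_digits y) <= M)%nat -> v <> 0 ->
  hd 0 (nzdigits (y + 3 ^ Z.of_nat M * v)) = hd 0 (nzdigits y).
Proof.
  intros Hy HM Hv; rewrite nzdigits_shift by auto.
  pose proof (nzdigits_neq_nil y Hy); destruct (nzdigits y); [contradiction | reflexivity].
Qed.

Definition sign_change (x y : Z) : nat := if x * y <? 0 then 1%nat else 0%nat.

Lemma sign_changes_app (l1 l2 : list Z) : l1 <> [] -> l2 <> [] ->
  sign_changes (l1 ++ l2)
  = (sign_changes l1 + sign_changes l2 + sign_change (last l1 0%Z) (hd 0%Z l2))%nat.
Proof.
  induction l1 as [|x l1 IH]; intros H1 H2; [contradiction|].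
  destruct l1 as [|x' l1].
  - destruct l2 as [|y l2]; [contradiction|]; cbn -[sign_change]; unfold sign_change; lia.
  - change ((x :: x' :: l1) ++ l2) with (x :: x' :: (l1 ++ l2)).
    change (sign_changes (x :: x' :: (l1 ++ l2)))
      with (sign_change x x' + sign_changes ((x' :: l1) ++ l2))%nat.
    rewrite IH by easy.
    change (sign_changes (x :: x' :: l1)) with (sign_change x x' + sign_changes (x' :: l1))%nat.
    change (last (x :: x' :: l1) 0) with (last (x' :: l1) 0); lia.
Qed.

Lemma sign_changes_opp (l : list Z) : sign_changes (map Z.opp l) = sign_changes l.
Proof.
  induction l as [|x [|y l] IH]; [reflexivity | reflexivity|].
  change (sign_changes (map Z.opp (x :: y :: l)))
    with (sign_change (- x) (- y) + sign_changes (map Z.opp (y :: l)))%nat.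
  rewrite IH; unfold sign_change; rewrite Z.mul_opp_opp; reflexivity.
Qed.

Lemma last_sign_changes (l : list Z) : Forall unit_sign l ->
  last l 0 = hd 0 l * (-1) ^ Z.of_nat (sign_changes l).
Proof.
  induction l as [|x [|y l] IH]; intros Hl; [reflexivity | cbn; lia|].
  inversion Hl as [|? ? Hx Hyl]; inversion Hyl as [|? ? Hy _].
  change (last (x :: y :: l) 0) with (last (y :: l) 0); rewrite IH by exact Hyl.
  change (sign_changes (x :: y :: l))
    with (sign_change x y + sign_changes (y :: l))%nat.
  cbn [hd]; rewrite Nat2Z.inj_add, Z.pow_add_r by lia.
  assert (Hxy : (-1) ^ Z.of_nat (sign_change x y) = x * y)
    by (destruct Hx as [->| ->], Hy as [->| ->]; reflexivity).
  rewrite Hxy; destruct Hx as [->| ->]; ring.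
Qed.

Lemma sgn_zsc (t : Z) : Z.sgn t = hd 0 (nzdigits t) * (-1) ^ Z.of_nat (zsc t).
Proof. rewrite <- last_nzdigits, zsc_nzdigits; apply last_sign_changes, nzdigits_unit_sign. Qed.

Lemma zsc_opp (t : Z) : zsc (- t) = zsc t.
Proof. rewrite !zsc_nzdigits, nzdigits_opp, sign_changes_opp; reflexivity. Qed.

Lemma zsc_shift (y v : Z) (M : nat) :
  y <> 0 -> v <> 0 -> (length (bt_digits y) <= M)%nat ->
  zsc (y + 3 ^ Z.of_nat M * v)
  = (zsc y + zsc v + sign_change (Z.sgn y) (hd 0%Z (nzdigits v)))%nat.
Proof.
  intros Hy Hv HM.
  rewrite !zsc_nzdigits, nzdigits_shift, sign_changes_app, last_nzdigits
    by auto using nzdigits_neq_nil.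
  reflexivity.
Qed.

(* Of the two junctions between [y] and [3^M w], [3^M (-w)], exactly one is a sign change. *)
Lemma zsc_shift_choice (y w : Z) (M e : nat) :
  y <> 0 -> w <> 0 -> (length (bt_digits y) <= M)%nat -> (e <= 1)%nat ->
  exists v, (v = w \/ v = - w) /\ zsc (y + 3 ^ Z.of_nat M * v) = (zsc y + zsc w + e)%nat.
Proof.
  intros Hy Hw HM He.
  pose proof (zsc_shift y w M Hy Hw HM) as Hplus.
  pose proof (zsc_shift y (- w) M Hy ltac:(lia) HM) as Hminus.
  assert (Hhd : hd 0 (nzdigits (- w)) = - hd 0 (nzdigits w))
    by (rewrite nzdigits_opp; destruct (nzdigits w); reflexivity).
  rewrite zsc_opp, Hhd in Hminus.
  assert (Hsum : (sign_change (Z.sgn y) (hd 0%Z (nzdigits w))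
                  + sign_change (Z.sgn y) (- hd 0%Z (nzdigits w)) = 1)%nat).
  { destruct (Z.sgn_spec y) as [[_ ->]|[[Hy0 _]|[_ ->]]]; [|lia|];
      destruct (hd_nzdigits_unit_sign w Hw) as [->| ->]; reflexivity. }
  revert Hplus Hminus Hsum.
  generalize (sign_change (Z.sgn y) (hd 0%Z (nzdigits w)))
             (sign_change (Z.sgn y) (- hd 0%Z (nzdigits w))).
  intros c c' Hplus Hminus Hsum.
  destruct (Nat.eq_dec c e) as [<-|Hce].
  - exists w; split; [left; reflexivity | exact Hplus].
  - exists (- w); split; [right; reflexivity | lia].
Qed.

Lemma infinite_fresh (L : Z -> Prop) : infinite_set L -> forall (U : list Z) (n : nat),
  exists l, length l = n /\ NoDup l /\ Forall L l /\ Forall (fun x => ~ In x U) l.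
Proof.
  intros HL U n; induction n as [|n (l & Hlen & Hnd & HLl & HUl)].
  - exists []; repeat constructor.
  - assert (Hx : exists x, L x /\ ~ In x (U ++ l)).
    { apply NNPP; intros Hno; apply HL; exists (U ++ l); intros x Lx.
      apply NNPP; intros Hx; apply Hno; eauto. }
    destruct Hx as (x & Lx & Hx); rewrite in_app_iff in Hx.
    exists (x :: l); cbn; repeat split; try constructor; auto; tauto.
Qed.

Lemma pigeonhole_mod (m : Z) (l : list Z) : 0 < m -> NoDup l -> m < Z.of_nat (length l) ->
  exists x y, In x l /\ In y l /\ x <> y /\ x mod m = y mod m.
Proof.
  intros Hm Hnd Hlen; apply NNPP; intros Hno.
  assert (Hinj : NoDup (map (fun x => x mod m) l)).
  { apply NoDup_map_NoDup_ForallPairs; auto.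
    intros x y Hx Hy E; destruct (Z.eq_dec x y); auto.
    exfalso; apply Hno; eauto 6. }
  assert (Hincl : incl (map (fun x => x mod m) l) (map Z.of_nat (seq 0 (Z.to_nat m)))).
  { intros r Hr; apply in_map_iff in Hr as (x & <- & _).
    pose proof (Z.mod_pos_bound x m Hm).
    apply in_map_iff; exists (Z.to_nat (x mod m)); rewrite in_seq; split; lia. }
  pose proof (NoDup_incl_length Hinj Hincl) as Hle.
  rewrite !length_map, length_seq in Hle; lia.
Qed.

Lemma infinite_congruent_pair (L : Z -> Prop) : infinite_set L -> forall (U : list Z) (M : nat),
  exists y1 y2 w, L y1 /\ L y2 /\ ~ In y1 U /\ ~ In y2 U /\ y1 <> y2 /\ w <> 0 /\
    y1 - y2 = 3 ^ Z.of_nat M * w.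
Proof.
  intros HL U M; set (m := 3 ^ Z.of_nat M).
  assert (Hm : 0 < m) by (apply Z.pow_pos_nonneg; lia).
  destruct (infinite_fresh L HL U (S (Z.to_nat m))) as (l & Hlen & Hnd & HLl & HUl).
  destruct (pigeonhole_mod m l Hm Hnd ltac:(lia)) as (x & y & Hx & Hy & Hxy & E).
  rewrite Forall_forall in HLl, HUl.
  pose proof (Z.div_mod x m ltac:(lia)); pose proof (Z.div_mod y m ltac:(lia)).
  exists x, y, (x / m - y / m); repeat split; auto.
  - intros Hq; apply Hxy; nia.
  - nia.
Qed.

Definition sip_plus (u : Z) (U : list Z) (y : Z) : Prop :=
  exists F G, NoDup F /\ NoDup G /\ incl F U /\ incl G U /\ y = u + zsum F - zsum G.

Lemma sip_plus_SIP (L : Z -> Prop) (u : Z) (U : list Z) (y : Z) :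
  Forall L U -> sip_plus u U y -> SIP L (y - u).
Proof.
  intros HU (F & G & HF & HG & HFU & HGU & ->); rewrite Forall_forall in HU.
  exists (zsum F), (zsum G); repeat split; [exists F | exists G | lia];
    repeat split; auto; apply Forall_forall; auto.
Qed.

Lemma sip_plus_extend (u : Z) (U : list Z) (y y1 y2 v : Z) :
  sip_plus u U y -> ~ In y1 U -> ~ In y2 U -> y1 <> y2 ->
  v = y1 - y2 \/ v = y2 - y1 -> sip_plus u (y1 :: y2 :: U) (y + v).
Proof.
  intros (F & G & HF & HG & HFU & HGU & ->) H1 H2 H12 Hv.
  assert (Hfresh : forall x, ~ In x U -> ~ In x F /\ ~ In x G) by (split; auto).
  destruct (Hfresh y1 H1), (Hfresh y2 H2).
  destruct Hv as [->| ->]; [exists (y1 :: F), (y2 :: G) | exists (y2 :: F), (y1 :: G)];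
    (split; [constructor; auto|]); (split; [constructor; auto|]);
    repeat split; try (intros x [<-|Hx]; cbn; auto); unfold zsum; cbn [fold_right]; ring.
Qed.

Lemma pow_m1_unit_sign (n : nat) : unit_sign ((-1) ^ Z.of_nat n).
Proof.
  unfold unit_sign; induction n as [|n IH]; [left; reflexivity|].
  rewrite Nat2Z.inj_succ, Z.pow_succ_r by lia; lia.
Qed.

Section Runs.

Variables (L : Z -> Prop) (u : Z).
Hypothesis L_infinite : infinite_set L.

Definition zsc_run (U : list Z) (M : nat) (d : Z) (a n : nat) : Prop :=
  forall i, (i < n)%nat -> exists y, sip_plus u U y /\ y <> 0 /\
    (length (bt_digits y) <= M)%nat /\ hd 0 (nzdigits y) = d /\ zsc y = (a + i)%nat.

Lemma zsc_run_start : exists U M d a, Forall L U /\ zsc_run U M d a 1.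
Proof.
  destruct (infinite_fresh L L_infinite [- u] 1) as ([|x [|]] & Hlen & _ & HLl & Hux);
    try discriminate.
  apply Forall_cons_iff in HLl as [Lx _]; apply Forall_cons_iff in Hux as [Hx _].
  assert (Hy : u + x <> 0) by (intros E; apply Hx; left; lia).
  exists [x], (length (bt_digits (u + x))), (hd 0 (nzdigits (u + x))), (zsc (u + x)).
  split; [constructor; auto|].
  intros i Hi; replace i with 0%nat by lia.
  exists (u + x); split; [|repeat split; auto; lia].
  exists [x], []; split; [repeat constructor; intros []|].
  split; [constructor|]; split; [intros z Hz; exact Hz|].
  split; [intros z []|]; unfold zsum; cbn; lia.
Qed.

(* Shifting by [±(y1 - y2) = ±3^M w] raises [z] by [z w] or [z w + 1] at will. *)
Lemma zsc_run_grow (U : list Z) (M : nat) (d : Z) (a n : nat) :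
  Forall L U -> zsc_run U M d a (S n) ->
  exists U' M' a', Forall L U' /\ zsc_run U' M' d a' (S (S n)).
Proof.
  intros HU Hrun.
  destruct (infinite_congruent_pair L L_infinite U M)
    as (y1 & y2 & w & L1 & L2 & N1 & N2 & N12 & Hw & Hy12).
  exists (y1 :: y2 :: U), (M + length (bt_digits w))%nat, (a + zsc w)%nat.
  split; [repeat constructor; auto|].
  intros i Hi.
  destruct (Hrun (Nat.min i n) ltac:(lia)) as (y & Hspan & Hy & HM & Hd & Hz).
  destruct (zsc_shift_choice y w M (i - Nat.min i n) Hy Hw HM ltac:(lia)) as (v & Hv & Hzv).
  assert (Hv0 : v <> 0) by lia.
  assert (Hlenv : length (bt_digits v) = length (bt_digits w))
    by (destruct Hv as [-> | ->]; [|rewrite bt_digits_opp, length_map]; reflexivity).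
  exists (y + 3 ^ Z.of_nat M * v); repeat split.
  - apply sip_plus_extend; auto; destruct Hv as [-> | ->]; lia.
  - apply shift_neq0; auto.
  - rewrite bt_length_shift, Hlenv by auto; lia.
  - rewrite hd_nzdigits_shift; auto.
  - rewrite Hzv, Hz; lia.
Qed.

Lemma zsc_run_exists (n : nat) : exists U M d a, Forall L U /\ zsc_run U M d a (S n).
Proof.
  induction n as [|n (U & M & d & a & HU & Hrun)]; [apply zsc_run_start|].
  destruct (zsc_run_grow U M d a n HU Hrun) as (U' & M' & a' & HU' & Hrun').
  exists U', M', d, a'; auto.
Qed.

(* By [sgn_zsc], the positive members of a run are those with [z] of one fixed parity. *)
Lemma positive_zsc_progression (K : nat) : exists U b, Forall L U /\
  forall j, (j < K)%nat -> exists y, sip_plus u U y /\ 0 < y /\ zsc y = (b + 2 * j)%nat.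
Proof.
  destruct (zsc_run_exists (2 * K)) as (U & M & d & a & HU & Hrun).
  destruct (Hrun 0%nat ltac:(lia)) as (y0 & _ & Hy0 & _ & Hd & _).
  assert (Hdu : unit_sign d) by (rewrite <- Hd; apply hd_nzdigits_unit_sign, Hy0).
  set (p := (-1) ^ Z.of_nat a).
  assert (Hp : unit_sign p) by apply pow_m1_unit_sign.
  set (i0 := if d * p =? 1 then 0%nat else 1%nat).
  assert (Hi0 : d * (-1) ^ Z.of_nat (a + i0) = 1).
  { unfold i0, p in *; rewrite Nat2Z.inj_add, Z.pow_add_r by lia.
    unfold unit_sign in *; destruct (Z.eqb_spec (d * (-1) ^ Z.of_nat a) 1); cbn; lia. }
  exists U, (a + i0)%nat; split; [exact HU|].
  intros j Hj.
  destruct (Hrun (i0 + 2 * j)%nat ltac:(unfold i0; destruct (_ =? _); lia))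
    as (y & Hspan & Hy & _ & Hdy & Hz).
  exists y; split; [exact Hspan|split; [|lia]].
  apply Z.sgn_pos_iff; rewrite sgn_zsc, Hdy, Hz.
  rewrite Nat.add_assoc, Nat2Z.inj_add, Z.pow_add_r, Nat2Z.inj_mul, Z.pow_mul_r by lia.
  rewrite Z.mul_assoc, Hi0, Z.pow_1_l by lia; reflexivity.
Qed.

End Runs.

Lemma odd_modulus_progression (K b r : Z) : 0 < K -> Z.odd K = true ->
  exists j, 0 <= j < K /\ (b + 2 * j) mod K = r mod K.
Proof.
  intros HK Hodd; apply Z.odd_spec in Hodd as (k & Hk).
  (* [k + 1] inverts 2 modulo [K = 2k + 1]. *)
  exists (((r - b) * (k + 1)) mod K); split; [apply Z.mod_pos_bound; lia|].
  rewrite (Z.mod_eq ((r - b) * (k + 1)) K) by lia.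
  replace (b + 2 * ((r - b) * (k + 1) - K * ((r - b) * (k + 1) / K)))
    with (r + ((r - b) - 2 * ((r - b) * (k + 1) / K)) * K) by (subst K; ring).
  apply Z.mod_add; lia.
Qed.

Theorem theorem4p6 :
  forall (A : Z -> Prop),
    (forall a, A a -> 1 <= a) ->
    (exists (L : Z -> Prop) (u : Z),
        (forall x, L x -> 1 <= x) /\ infinite_set L /\
        (forall n, 1 <= n -> SIP L (n - u) -> A n)) ->
    forall K : Z, 0 < K -> Z.odd K = true ->
    forall r : Z, exists a, A a /\ Z.of_nat (zsc a) mod K = r mod K.
Proof.
  intros A _ (L & u & _ & HL & HA) K HK Hodd r.
  destruct (positive_zsc_progression L u HL (Z.to_nat K)) as (U & b & HU & Hprog).
  destruct (odd_modulus_progression K (Z.of_nat b) r HK Hodd) as (j & Hj & Hjr).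
  destruct (Hprog (Z.to_nat j) ltac:(lia)) as (y & Hy & Hpos & Hz).
  exists y; split.
  - apply HA; [lia|]; exact (sip_plus_SIP L u U y HU Hy).
  - rewrite Hz, Nat2Z.inj_add, Nat2Z.inj_mul, Z2Nat.id by lia; exact Hjr.
Qed.
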